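(* Let $x\in\mathbb R^N$ be a vector with block structure $\mathcal B=(\mathcal B_1,\dots,\mathcal B_B)$ and let $\omega=(\omega_1,\dots,\omega_B)$ be weights with $\omega_b\ge 1$. Let $s>\|\omega\|_\infty^2$. Then for $q<p\le 2$ and any norm $\|\cdot\|_r$ used on the blocks, $$\sigma_s(x)_{r,p}^{(\omega)}\le \widetilde\sigma_s(x)_{r,p}^{(\omega)}\le (s-\|\omega\|_\infty^2)^{\frac1p-\frac1q}\,\|x\|_{r,q}^{(\omega)}.$$
   Context: Block structure: $\mathcal B=(\mathcal B_1,\dots,\mathcal B_B)$ is a partition of $\{1,\dots,N\}$; for $x\in\mathbb R^N$, $x[b]=x[\mathcal B_b]$ is the restriction of $x$ to block $b$; for $S\subseteq\{1,\dots,B\}$, $x[S]$ is the vector equal to $x$ on the blocks indexed by $S$ and $0$ elsewhere. Weights $\omega_b\ge1$, $\|\omega\|_\infty=\max_b\omega_b$, $\omega(S)=\sum_{b\in S}\omega_b^2$. For $p>0$ and a block norm $\|\cdot\|_r$: $\|x\|_{r,p}^{(\omega)}=\big(\sum_{b}\omega_b^{2-p}\|x[b]\|_r^p\big)^{1/p}$. Weighted block sparsity: $\|x\|_0^{(\omega)}=\omega(\{b:x[b]\neq0\})$. Best weighted $s$-block approximation error: $\sigma_s(x)_{r,p}^{(\omega)}=\inf\{\|x-z\|_{r,p}^{(\omega)}:\|z\|_0^{(\omega)}\le s\}$. Quasi-best approximation: let $\pi$ be a permutation of $\{1,\dots,B\}$ with $\|x[\pi(1)]\|_r/\omega_{\pi(1)}\ge\|x[\pi(2)]\|_r/\omega_{\pi(2)}\ge\cdots$;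 for $s\ge\|\omega\|_\infty^2$ let $k_s=\max\{k:\sum_{i=1}^k\omega_{\pi(i)}^2\le s\}$, $S=\{\pi(1),\dots,\pi(k_s)\}$, and $\widetilde\sigma_s(x)_{r,p}^{(\omega)}=\|x-x[S]\|_{r,p}^{(\omega)}$. *)

From Stdlib Require Import Reals Lra Lia List Permutation Classical ClassicalEpsilon.
Import ListNotations.
Open Scope R_scope.

(* Coordinates are indexed by nat; a vector of R^N is x : nat -> R, only
   the coordinates i < N are meaningful.  A block structure with B blocks is
   given by blk : nat -> nat, coordinate i (i < N) lying in block blk i. *)

Definition is_block_partition (N B : nat) (blk : nat -> nat) : Prop :=
  (forall i, (i < N)%nat -> (blk i < B)%nat) /\
  (forall b, (b < B)%nat -> exists i, (i < N)%nat /\ blk i = b).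

Definition blockv (N : nat) (blk : nat -> nat) (x : nat -> R) (b : nat) : nat -> R :=
  fun i => if andb (Nat.ltb i N) (Nat.eqb (blk i) b) then x i else 0.

Definition restrS (N : nat) (blk : nat -> nat) (x : nat -> R) (S : list nat) : nat -> R :=
  fun i => if andb (Nat.ltb i N) (existsb (Nat.eqb (blk i)) S) then x i else 0.

Definition is_block_norm (N B : nat) (blk : nat -> nat) (nrm : nat -> (nat -> R) -> R) : Prop :=
  forall b, (b < B)%nat ->
    (forall u, nrm b (blockv N blk u b) = 0 <-> (forall i, blockv N blk u b i = 0)) /\
    (forall c u, nrm b (blockv N blk (fun i => c * u i) b) = Rabs c * nrm b (blockv N blk u b)) /\
    (forall u v, nrm b (blockv N blk (fun i => u i + v i) b)
                 <= nrm b (blockv N blk u b) + nrm b (blockv N blk v b)).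

Definition bnorm (N : nat) (blk : nat -> nat) (nrm : nat -> (nat -> R) -> R)
  (x : nat -> R) (b : nat) : R := nrm b (blockv N blk x b).

(* real power with 0^a = 0 (used only for a > 0 or a positive base) *)
Definition rpow (a e : R) : R := if Rle_dec a 0 then 0 else Rpower a e.

Definition sumL (l : list nat) (f : nat -> R) : R := fold_right Rplus 0 (map f l).

Definition winf (B : nat) (w : nat -> R) : R := fold_right Rmax 0 (map w (seq 0 B)).

Definition wnorm (N B : nat) (blk : nat -> nat) (nrm : nat -> (nat -> R) -> R)
  (w : nat -> R) (p : R) (x : nat -> R) : R :=
  rpow (sumL (seq 0 B) (fun b => rpow (w b) (2 - p) * rpow (bnorm N blk nrm x b) p)) (1 / p).

Definition blocknz (N : nat) (blk : nat -> nat) (z : nat -> R) (b : nat) : bool :=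
  existsb (fun i => andb (Nat.eqb (blk i) b) (if Req_EM_T (z i) 0 then false else true))
          (seq 0 N).

Definition wsparsity (N B : nat) (blk : nat -> nat) (w : nat -> R) (z : nat -> R) : R :=
  sumL (seq 0 B) (fun b => if blocknz N blk z b then (w b) ^ 2 else 0).

(* infimum of a set of reals (0 if it has no greatest lower bound) *)
Definition is_inf (E : R -> Prop) (m : R) : Prop :=
  (forall y, E y -> m <= y) /\ (forall m', (forall y, E y -> m' <= y) -> m' <= m).

Definition Rinf (E : R -> Prop) : R :=
  match excluded_middle_informative (exists m, is_inf E m) with
  | left H => proj1_sig (constructive_indefinite_description _ H)
  | right _ => 0
  end.

Definition sigma_s (N B : nat) (blk : nat -> nat) (nrm : nat -> (nat -> R) -> R)
  (w : nat -> R) (p s : R) (x : nat -> R) : R :=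
  Rinf (fun y => exists z : nat -> R, wsparsity N B blk w z <= s /\
                  y = wnorm N B blk nrm w p (fun i => x i - z i)).

(* pi (given as the list [pi(1); ...; pi(B)]) is a permutation of the blocks
   sorted so that ||x[pi(i)]||_r / omega_pi(i) is nonincreasing *)
Definition sorted_perm (N B : nat) (blk : nat -> nat) (nrm : nat -> (nat -> R) -> R)
  (w : nat -> R) (x : nat -> R) (pi : list nat) : Prop :=
  Permutation pi (seq 0 B) /\
  (forall i j, (i < j)%nat -> (j < B)%nat ->
     bnorm N blk nrm x (nth j pi 0%nat) / w (nth j pi 0%nat)
     <= bnorm N blk nrm x (nth i pi 0%nat) / w (nth i pi 0%nat)).

Definition is_ks (B : nat) (w : nat -> R) (pi : list nat) (s : R) (k : nat) : Prop :=
  (k <= B)%nat /\ sumL (firstn k pi) (fun b => (w b) ^ 2) <= s /\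
  (forall k', (k' <= B)%nat -> sumL (firstn k' pi) (fun b => (w b) ^ 2) <= s -> (k' <= k)%nat).

Definition tsigma_s (N B : nat) (blk : nat -> nat) (nrm : nat -> (nat -> R) -> R)
  (w : nat -> R) (p : R) (x : nat -> R) (pi : list nat) (k : nat) : R :=
  wnorm N B blk nrm w p (fun i => x i - restrS N blk x (firstn k pi) i).

(* Write the (p-th power of the) weighted norm as sum_b w_b^2 a_b^p with
   a_b = ||x[b]||_r / w_b; the quasi-best approximation keeps the k_s blocks
   with the largest a_b.  Put m = a_{pi(k_s+1)}.  The kept blocks have a_b >= m
   and total weight D > s - ||w||_oo^2 (one more block would exceed s), so
   D m^q <= ||x||_{r,q}^q; the discarded blocks have a_b <= m, so
   tilde-sigma^p <= m^(p-q) ||x||_{r,q}^q.  Eliminating m gives the bound, and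
   sigma_s <= tilde-sigma_s because the kept part x[S] is weighted s-sparse. *)

From Stdlib Require Import Reals List Permutation Lra Lia FunctionalExtensionality ClassicalEpsilon.
Open Scope R_scope.

Lemma exp_le_compat a b : a <= b -> exp a <= exp b.
Proof. intros [H | <-]; [left; apply exp_increasing | right]; auto. Qed.

Lemma ln_le_compat a b : 0 < a -> a <= b -> ln a <= ln b.
Proof. intros Ha [H | <-]; [left; apply ln_increasing | right]; auto. Qed.

Lemma rpow_nonneg a e : 0 <= rpow a e.
Proof. unfold rpow. destruct (Rle_dec a 0); [lra | left; apply exp_pos]. Qed.

Lemma rpow_0_l e : rpow 0 e = 0.
Proof. unfold rpow. destruct (Rle_dec 0 0); lra. Qed.

Lemma rpow_Rpower a e : 0 < a -> rpow a e = Rpower a e.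
Proof. intros Ha. unfold rpow. destruct (Rle_dec a 0); [lra | reflexivity]. Qed.

Lemma rpow_pos a e : 0 < a -> 0 < rpow a e.
Proof. intros Ha. rewrite rpow_Rpower by exact Ha. apply exp_pos. Qed.

Lemma rpow_le_compat a b e : 0 <= a -> a <= b -> 0 <= e -> rpow a e <= rpow b e.
Proof.
  intros [Ha | <-] Hab He; [| rewrite rpow_0_l; apply rpow_nonneg].
  rewrite !rpow_Rpower by lra. apply Rle_Rpower_l; lra.
Qed.

Lemma rpow_le_split a m p q : 0 <= a -> a <= m -> q <= p ->
  rpow a p <= rpow m (p - q) * rpow a q.
Proof.
  intros [Ha | <-] Ham Hqp; [| rewrite !rpow_0_l; lra].
  replace p with ((p - q) + q) at 1 by ring.
  rewrite !(rpow_Rpower a), Rpower_plus, <- !(rpow_Rpower a) by lra.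
  apply Rmult_le_compat_r; [apply rpow_nonneg | apply rpow_le_compat; lra].
Qed.

Lemma rpow_weight wb n e : 0 < wb -> 0 <= n ->
  rpow wb (2 - e) * rpow n e = wb ^ 2 * rpow (n / wb) e.
Proof.
  intros Hw [Hn | <-]; [| unfold Rdiv; rewrite Rmult_0_l, !rpow_0_l; ring].
  rewrite !rpow_Rpower by (try apply Rdiv_lt_0_compat; lra).
  unfold Rpower, Rdiv. rewrite ln_mult, ln_Rinv by (try apply Rinv_0_lt_compat; lra).
  rewrite <- (exp_ln (wb ^ 2)), ln_pow by (try apply pow_lt; lra).
  rewrite <- !exp_plus. f_equal. simpl INR. ring.
Qed.

(* In logarithmic form the two hypotheses read [ln D + q ln m <= ln Q] and
   [ln L <= (p - q) ln m + ln Q]; eliminating [ln m] gives the claim. *)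
Lemma rpow_interpolation L Q D m p q : 0 < q < p -> 0 < D -> 0 <= m -> 0 <= L ->
  D * rpow m q <= Q -> L <= rpow m (p - q) * Q ->
  rpow L (1 / p) <= rpow D (1 / p - 1 / q) * rpow Q (1 / q).
Proof.
  intros [Hq Hqp] HD Hm [HL | <-] HDm HLm;
    [| rewrite rpow_0_l; apply Rmult_le_pos; apply rpow_nonneg].
  destruct Hm as [Hm | <-]; [| rewrite rpow_0_l in HLm; lra].
  assert (HQ : 0 < Q) by (pose proof (rpow_pos m q Hm); nra).
  rewrite !rpow_Rpower in * by lra. unfold Rpower in *.
  assert (Hlow : ln D + q * ln m <= ln Q).
  { rewrite <- (ln_exp (q * ln m)), <- ln_mult by (auto; apply exp_pos).
    apply ln_le_compat; [pose proof (exp_pos (q * ln m)); nra | exact HDm]. }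
  assert (Hup : ln L <= (p - q) * ln m + ln Q).
  { rewrite <- (ln_exp ((p - q) * ln m)), <- ln_mult by (auto; apply exp_pos).
    apply ln_le_compat; auto. }
  rewrite <- exp_plus. apply exp_le_compat.
  apply Rmult_le_reg_l with (p * q); [nra |].
  replace (p * q * (1 / p * ln L)) with (q * ln L) by (field; lra).
  replace (p * q * ((1 / p - 1 / q) * ln D + 1 / q * ln Q))
    with ((q - p) * ln D + p * ln Q) by (field; lra).
  nra.
Qed.
Lemma sumL_app l1 l2 f : sumL (l1 ++ l2) f = sumL l1 f + sumL l2 f.
Proof. unfold sumL. induction l1 as [| b l1 IH]; simpl; [lra | rewrite IH; lra]. Qed.

Lemma sumL_le l f g : (forall b, In b l -> f b <= g b) -> sumL l f <= sumL l g.
Proof.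
  unfold sumL. induction l as [| b l IH]; simpl; intros H; [lra |].
  apply Rplus_le_compat; [apply H | apply IH; intros]; auto.
Qed.

Lemma sumL_ext l f g : (forall b, In b l -> f b = g b) -> sumL l f = sumL l g.
Proof. intros H. apply Rle_antisym; apply sumL_le; intros b Hb; rewrite H; auto; lra. Qed.

Lemma sumL_const0 l : sumL l (fun _ => 0) = 0.
Proof. unfold sumL. induction l as [| b l IH]; simpl; [| rewrite IH]; lra. Qed.

Lemma sumL_nonneg l f : (forall b, In b l -> 0 <= f b) -> 0 <= sumL l f.
Proof. intros H. rewrite <- (sumL_const0 l). apply sumL_le; exact H. Qed.

Lemma sumL_eq0 l f : (forall b, In b l -> f b = 0) -> sumL l f = 0.
Proof. intros H. rewrite <- (sumL_const0 l). apply sumL_ext; exact H. Qed.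

Lemma sumL_scal_l l k f : sumL l (fun b => k * f b) = k * sumL l f.
Proof. unfold sumL. induction l as [| b l IH]; simpl; [| rewrite IH]; lra. Qed.

Lemma sumL_Permutation l l' f : Permutation l l' -> sumL l f = sumL l' f.
Proof. unfold sumL. induction 1; simpl; lra. Qed.

Lemma Rinf_le (E : R -> Prop) lb y : (forall z, E z -> lb <= z) -> E y -> Rinf E <= y.
Proof.
  intros Hlb Hy. unfold Rinf.
  destruct (excluded_middle_informative _) as [Hinf | Hno].
  - exact (proj1 (proj2_sig (constructive_indefinite_description _ Hinf)) y Hy).
  - exfalso. apply Hno.
    destruct (completeness (fun z => E (- z))) as [M [HMub HMlub]].
    + exists (- lb). intros z Hz. specialize (Hlb _ Hz). lra.
    + exists (- y). rewrite Ropp_involutive. exact Hy.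
    + exists (- M). split.
      * intros z Hz. enough (- z <= M) by lra.
        apply HMub. rewrite Ropp_involutive. exact Hz.
      * intros m' Hm'. enough (M <= - m') by lra.
        apply HMlub. intros z Hz. specialize (Hm' _ Hz). lra.
Qed.

Lemma tail_interpolation (S T : list nat) (c a : nat -> R) p q D m :
  0 < q < p -> 0 < D -> 0 <= m ->
  (forall b, In b (S ++ T) -> 0 <= c b /\ 0 <= a b) ->
  (forall b, In b S -> m <= a b) -> (forall b, In b T -> a b <= m) ->
  D <= sumL S c ->
  rpow (sumL T (fun b => c b * rpow (a b) p)) (1 / p)
  <= rpow D (1 / p - 1 / q) * rpow (sumL (S ++ T) (fun b => c b * rpow (a b) q)) (1 / q).
Proof.
  intros Hqp HD Hm Hca HS HT HDS.
  assert (HcaS : forall b, In b S -> 0 <= c b /\ 0 <= a b)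
    by (intros b Hb; apply Hca, in_or_app; auto).
  assert (HcaT : forall b, In b T -> 0 <= c b /\ 0 <= a b)
    by (intros b Hb; apply Hca, in_or_app; auto).
  assert (Hterm : forall e b, In b (S ++ T) -> 0 <= c b * rpow (a b) e)
    by (intros e b Hb; apply Rmult_le_pos; [apply Hca, Hb | apply rpow_nonneg]).
  assert (HSq : 0 <= sumL S (fun b => c b * rpow (a b) q))
    by (apply sumL_nonneg; intros b Hb; apply Hterm, in_or_app; auto).
  assert (HTq : 0 <= sumL T (fun b => c b * rpow (a b) q))
    by (apply sumL_nonneg; intros b Hb; apply Hterm, in_or_app; auto).
  apply rpow_interpolation with m; auto.
  - apply sumL_nonneg; intros b Hb; apply Hterm, in_or_app; auto.
  - rewrite sumL_app.
    apply Rle_trans with (sumL S c * rpow m q);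
      [apply Rmult_le_compat_r; [apply rpow_nonneg | exact HDS] |].
    rewrite Rmult_comm, <- sumL_scal_l.
    enough (sumL S (fun b => rpow m q * c b) <= sumL S (fun b => c b * rpow (a b) q)) by lra.
    apply sumL_le; intros b Hb. destruct (HcaS b Hb).
    rewrite Rmult_comm. apply Rmult_le_compat_l; [lra |].
    apply rpow_le_compat; auto; lra.
  - apply Rle_trans with (sumL T (fun b => rpow m (p - q) * (c b * rpow (a b) q))).
    + apply sumL_le; intros b Hb. destruct (HcaT b Hb).
      rewrite <- Rmult_assoc, (Rmult_comm _ (c b)), Rmult_assoc.
      apply Rmult_le_compat_l; [lra |]. apply rpow_le_split; auto; lra.
    + rewrite sumL_scal_l, sumL_app.
      apply Rmult_le_compat_l; [apply rpow_nonneg | lra].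
Qed.

Lemma existsb_eqb_In b S : existsb (Nat.eqb b) S = true <-> In b S.
Proof.
  rewrite existsb_exists. split.
  - intros [b' [Hb' Heq]]. apply Nat.eqb_eq in Heq. subst. exact Hb'.
  - intros Hb. exists b. split; [exact Hb | apply Nat.eqb_refl].
Qed.

Lemma NoDup_app_disjoint (l1 l2 : list nat) b : NoDup (l1 ++ l2) -> In b l1 -> ~ In b l2.
Proof.
  induction l1 as [| a l1 IH]; simpl; intros Hnd Hb; [contradiction |].
  inversion Hnd as [| ? ? Ha Hnd']; subst. destruct Hb as [<- | Hb].
  - intros Hb2. apply Ha, in_or_app. auto.
  - exact (IH Hnd' Hb).
Qed.

Section AntitoneList.
Variables (f : nat -> R) (l : list nat).
Hypothesis Hanti : forall i j, (i < j)%nat -> (j < length l)%nat ->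
  f (nth j l 0%nat) <= f (nth i l 0%nat).

Lemma antitone_skipn k t : In t (skipn k l) -> f t <= f (nth k l 0%nat).
Proof.
  intros Ht. destruct (In_nth _ _ 0%nat Ht) as [i [Hi <-]].
  rewrite length_skipn in Hi. rewrite nth_skipn.
  destruct i as [| i]; [rewrite Nat.add_0_r; lra | apply Hanti; lia].
Qed.

Lemma antitone_firstn k j : (k < length l)%nat -> In j (firstn k l) ->
  f (nth k l 0%nat) <= f j.
Proof.
  intros Hk Hj. destruct (In_nth _ _ 0%nat Hj) as [i [Hi <-]].
  rewrite length_firstn in Hi. rewrite nth_firstn.
  destruct (Nat.ltb_spec i k); [apply Hanti | ]; lia.
Qed.

End AntitoneList.

Lemma le_winf B w b : (b < B)%nat -> w b <= winf B w.
Proof.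
  unfold winf. intros Hb.
  assert (Hin : In (w b) (map w (seq 0 B))) by (apply in_map, in_seq; lia).
  revert Hin. generalize (map w (seq 0 B)).
  induction l as [| a l IH]; simpl; [contradiction |].
  intros [<- | Hin]; [apply Rmax_l |].
  eapply Rle_trans; [apply IH, Hin | apply Rmax_r].
Qed.

(* By maximality of [k], adding the next block [pi(k)] overshoots [s], and that
   block weighs at most [winf B w ^ 2]. *)
Lemma ks_head_mass B w pi s k : is_ks B w pi s k -> length pi = B -> (k < B)%nat ->
  (forall b, In b pi -> 0 <= w b <= winf B w) ->
  s - winf B w ^ 2 < sumL (firstn k pi) (fun b => w b ^ 2).
Proof.
  intros [HkB [_ Hmax]] Hlen Hk Hw.
  assert (Hover : s < sumL (firstn (S k) pi) (fun b => w b ^ 2)).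
  { destruct (Rlt_le_dec s (sumL (firstn (S k) pi) (fun b => w b ^ 2))) as [H | H];
      [exact H | apply Hmax in H; lia]. }
  rewrite <- (firstn_skipn k pi) in Hover at 1.
  destruct (skipn k pi) as [| t T] eqn:ET.
  - apply (f_equal (@length nat)) in ET. rewrite length_skipn in ET. simpl in ET. lia.
  - assert (Ht : In t pi) by (rewrite <- (firstn_skipn k pi), ET; apply in_or_app; simpl; auto).
    assert (Hlen_head : length (firstn k pi) = k) by (rewrite length_firstn; lia).
    rewrite <- Hlen_head, <- Nat.add_1_r, firstn_app_2, sumL_app in Hover at 1.
    unfold sumL at 2 in Hover. cbn [firstn map fold_right] in Hover.
    destruct (Hw t Ht). assert (w t ^ 2 <= winf B w ^ 2) by (simpl; nra). lra.
Qed.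

Section QuasiBestApproximation.
Variables (N B : nat) (blk : nat -> nat) (nrm : nat -> (nat -> R) -> R) (w x : nat -> R).

Lemma bnorm_nonneg y b : is_block_norm N B blk nrm -> (b < B)%nat -> 0 <= bnorm N blk nrm y b.
Proof.
  intros Hnrm Hb. destruct (Hnrm b Hb) as [Hzero [Hhom Htri]]. unfold bnorm.
  specialize (Htri y (fun i => -1 * y i)). rewrite Hhom, Rabs_left in Htri by lra.
  enough (nrm b (blockv N blk (fun i => y i + -1 * y i) b) = 0) by lra.
  apply Hzero. intros i. unfold blockv. destruct (_ && _)%bool; lra.
Qed.

Lemma bnorm_sub_restrS_in S b : is_block_norm N B blk nrm -> (b < B)%nat -> In b S ->
  bnorm N blk nrm (fun i => x i - restrS N blk x S i) b = 0.
Proof.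
  intros Hnrm Hb HbS. apply (proj1 (Hnrm b Hb)). intros i. unfold blockv, restrS.
  destruct (Nat.ltb i N); simpl; [| reflexivity].
  destruct (Nat.eqb_spec (blk i) b) as [-> |]; [| reflexivity].
  rewrite (proj2 (existsb_eqb_In b S) HbS). ring.
Qed.

Lemma bnorm_sub_restrS_notin S b : ~ In b S ->
  bnorm N blk nrm (fun i => x i - restrS N blk x S i) b = bnorm N blk nrm x b.
Proof.
  intros HbS. unfold bnorm. f_equal. apply functional_extensionality. intros i.
  unfold blockv, restrS. destruct (Nat.ltb i N); simpl; [| reflexivity].
  destruct (Nat.eqb_spec (blk i) b) as [-> |]; [| reflexivity].
  destruct (existsb (Nat.eqb b) S) eqn:E; [| ring].
  exfalso. apply HbS, existsb_eqb_In, E.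
Qed.

Lemma blocknz_restrS S b : blocknz N blk (restrS N blk x S) b = true -> In b S.
Proof.
  unfold blocknz. intros [i [_ Hi]]%existsb_exists.
  apply andb_prop in Hi as [Hblk Hnz]. apply Nat.eqb_eq in Hblk as <-.
  destruct (Req_EM_T (restrS N blk x S i) 0) as [| Hxi]; [discriminate |].
  unfold restrS in Hxi. destruct (Nat.ltb i N && existsb (Nat.eqb (blk i)) S)%bool eqn:E;
    [| contradiction].
  apply andb_prop in E as [_ E]. apply existsb_eqb_In, E.
Qed.

Definition block_ratio b := bnorm N blk nrm x b / w b.

Variable pi : list nat.
Hypothesis Hperm : Permutation pi (seq 0 B).

Lemma In_perm_lt b : In b pi -> (b < B)%nat.
Proof. intros Hb. apply (Permutation_in _ Hperm), in_seq in Hb. lia. Qed.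

Lemma NoDup_perm : NoDup pi.
Proof. apply (Permutation_NoDup (Permutation_sym Hperm)), seq_NoDup. Qed.

Lemma wsparsity_restrS k :
  wsparsity N B blk w (restrS N blk x (firstn k pi)) <= sumL (firstn k pi) (fun b => w b ^ 2).
Proof.
  set (S := firstn k pi). set (T := skipn k pi).
  assert (Hdisj : forall b, In b S -> ~ In b T)
    by (intros b; apply NoDup_app_disjoint; unfold S, T; rewrite firstn_skipn; apply NoDup_perm).
  unfold wsparsity.
  apply Rle_trans with (sumL (seq 0 B) (fun b => if in_dec Nat.eq_dec b S then w b ^ 2 else 0)).
  - apply sumL_le. intros b _.
    destruct (blocknz N blk (restrS N blk x S) b) eqn:E, (in_dec Nat.eq_dec b S);
      try lra; [apply blocknz_restrS in E; contradiction | apply pow2_ge_0].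
  - rewrite <- (sumL_Permutation _ _ _ Hperm), <- (firstn_skipn k pi), sumL_app. fold S T.
    rewrite (sumL_eq0 T), Rplus_0_r.
    + apply Req_le, sumL_ext. intros b Hb. destruct (in_dec Nat.eq_dec b S); tauto.
    + intros b Hb. destruct (in_dec Nat.eq_dec b S) as [HbS |]; [| reflexivity].
      exfalso. exact (Hdisj b HbS Hb).
Qed.

Lemma sigma_le_tsigma p s k : sumL (firstn k pi) (fun b => w b ^ 2) <= s ->
  sigma_s N B blk nrm w p s x <= tsigma_s N B blk nrm w p x pi k.
Proof.
  intros Hmass. unfold sigma_s. apply Rinf_le with 0.
  - intros y [z [_ ->]]. apply rpow_nonneg.
  - exists (restrS N blk x (firstn k pi)). split; [| reflexivity].
    eapply Rle_trans; [apply wsparsity_restrS | exact Hmass].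
Qed.

Hypothesis Hnrm : is_block_norm N B blk nrm.
Hypothesis Hw : forall b, (b < B)%nat -> 0 < w b.

Lemma wnorm_ratio e :
  wnorm N B blk nrm w e x = rpow (sumL pi (fun b => w b ^ 2 * rpow (block_ratio b) e)) (1 / e).
Proof.
  unfold wnorm. f_equal. rewrite <- (sumL_Permutation _ _ _ Hperm).
  apply sumL_ext. intros b Hb. apply In_perm_lt in Hb.
  apply rpow_weight; [apply Hw, Hb | apply bnorm_nonneg; assumption].
Qed.

Lemma tsigma_ratio p k : tsigma_s N B blk nrm w p x pi k
  = rpow (sumL (skipn k pi) (fun b => w b ^ 2 * rpow (block_ratio b) p)) (1 / p).
Proof.
  unfold tsigma_s, wnorm. f_equal.
  assert (Hin : forall b, In b (firstn k pi ++ skipn k pi) -> (b < B)%nat)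
    by (intros b; rewrite firstn_skipn; apply In_perm_lt).
  rewrite <- (sumL_Permutation _ _ _ Hperm), <- (firstn_skipn k pi) at 1.
  rewrite sumL_app, sumL_eq0, Rplus_0_l.
  - apply sumL_ext. intros b Hb.
    assert (HbB : (b < B)%nat) by (apply Hin, in_or_app; auto).
    rewrite bnorm_sub_restrS_notin.
    + apply rpow_weight; [apply Hw, HbB | apply bnorm_nonneg; assumption].
    + intros HbS. apply (NoDup_app_disjoint (firstn k pi) (skipn k pi) b) in HbS;
        [contradiction | rewrite firstn_skipn; apply NoDup_perm].
  - intros b Hb. rewrite bnorm_sub_restrS_in, rpow_0_l by (auto; apply Hin, in_or_app; auto).
    ring.
Qed.

Lemma block_ratio_nonneg b : (b < B)%nat -> 0 <= block_ratio b.
Proof.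
  intros Hb. unfold block_ratio, Rdiv. apply Rmult_le_pos.
  - apply bnorm_nonneg; assumption.
  - left. apply Rinv_0_lt_compat, Hw, Hb.
Qed.

Lemma tsigma_le_wnorm p q s k : 0 < q < p -> winf B w ^ 2 < s ->
  (forall i j, (i < j)%nat -> (j < B)%nat ->
     block_ratio (nth j pi 0%nat) <= block_ratio (nth i pi 0%nat)) ->
  is_ks B w pi s k ->
  tsigma_s N B blk nrm w p x pi k
    <= rpow (s - winf B w ^ 2) (1 / p - 1 / q) * wnorm N B blk nrm w q x.
Proof.
  intros Hqp Hs Hsorted Hk.
  assert (Hlen : length pi = B) by (rewrite (Permutation_length Hperm); apply length_seq).
  rewrite tsigma_ratio, wnorm_ratio. rewrite <- (firstn_skipn k pi) at 2.
  destruct (Nat.lt_ge_cases k B) as [HkB | HkB].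
  - assert (HnthB : (nth k pi 0 < B)%nat) by (apply In_perm_lt, nth_In; lia).
    apply tail_interpolation with (m := block_ratio (nth k pi 0%nat)).
    + exact Hqp.
    + lra.
    + apply block_ratio_nonneg, HnthB.
    + intros b Hb. rewrite firstn_skipn in Hb. apply In_perm_lt in Hb.
      split; [apply pow2_ge_0 | apply block_ratio_nonneg, Hb].
    + intros j Hj. apply (antitone_firstn block_ratio pi); [rewrite Hlen | lia | ]; assumption.
    + intros t Ht. apply (antitone_skipn block_ratio pi); [rewrite Hlen |]; assumption.
    + left. apply ks_head_mass; auto.
      intros b Hb. apply In_perm_lt in Hb. pose proof (Hw b Hb).
      split; [lra | apply le_winf, Hb].
  - assert (Hnil : skipn k pi = nil) by (apply skipn_all2; lia).
    rewrite Hnil. unfold sumL. simpl. rewrite rpow_0_l.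
    apply Rmult_le_pos; apply rpow_nonneg.
Qed.

End QuasiBestApproximation.

Theorem mainTheorem1
  (N B : nat) (blk : nat -> nat) (nrm : nat -> (nat -> R) -> R) (w : nat -> R)
  (x : nat -> R) (p q s : R) (pi : list nat) (k : nat)
  (Hpart : is_block_partition N B blk)
  (Hnrm : is_block_norm N B blk nrm)
  (Hw : forall b, (b < B)%nat -> 1 <= w b)
  (Hs : (winf B w) ^ 2 < s)
  (Hq : 0 < q) (Hqp : q < p) (Hp2 : p <= 2)
  (Hpi : sorted_perm N B blk nrm w x pi)
  (Hk : is_ks B w pi s k) :
  sigma_s N B blk nrm w p s x <= tsigma_s N B blk nrm w p x pi k /\
  tsigma_s N B blk nrm w p x pi k
    <= rpow (s - (winf B w) ^ 2) (1 / p - 1 / q) * wnorm N B blk nrm w q x.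
Proof.
  destruct Hpi as [Hperm Hsorted].
  assert (Hwpos : forall b, (b < B)%nat -> 0 < w b) by (intros b Hb; specialize (Hw b Hb); lra).
  split.
  - apply sigma_le_tsigma; [exact Hperm | apply Hk].
  - apply tsigma_le_wnorm; auto.
Qed.
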